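(* Let $W\ge2$, $B>0$, $\delta>0$ and $1\le k\le L$. Let $F_k,G_k\in\Phi_k(L,W,S,B)$ have weights and biases with $\|\mathcal W_F^{(l)}-\mathcal W_G^{(l)}\|_{\infty,\infty}\le\delta$ and $\|b_F^{(l)}-b_G^{(l)}\|_\infty\le\delta$ for all $1\le l\le k$. Then $$\sup_{x\in\Omega}\|J[F_k](x)-J[G_k](x)\|_\infty\le\delta\,W^{\frac{3^{k-1}-1}{2}}(B\vee d)^{\frac{5\cdot3^{k-1}-1}{2}}\,2^{\frac{3^k-1}{2}-k+1}\,3^{2k-2}.$$ In particular, for $k=L$, $$\sup_{x\in\Omega}\Big|\|\nabla F_L(x)\|-\|\nabla G_L(x)\|\Big|\le\delta\,W^{\frac{3^{L-1}-1}{2}}(B\vee d)^{\frac{5\cdot3^{L-1}-1}{2}}\,2^{\frac{3^L-1}{2}-L+1}\,3^{2L-2}.$$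
   Context: $\Omega=[0,1]^d$, $B\vee d=\max\{B,d\}$. $\eta_3(t)=\max\{t,0\}^3$ applied componentwise. Given weights $\mathcal W^{(1)}\in\mathbb R^{W\times d}$, $\mathcal W^{(l)}\in\mathbb R^{W\times W}$ ($1<l<L$), $\mathcal W^{(L)}\in\mathbb R^{1\times W}$ and biases $b^{(l)}$ of matching sizes, all entries of absolute value at most $B$ and with at most $S$ nonzero entries in total, define $F_1(x)=\mathcal W^{(1)}x+b^{(1)}$ and $F_k(x)=\mathcal W^{(k)}\eta_3(F_{k-1}(x))+b^{(k)}$ for $2\le k\le L$; $\Phi_k(L,W,S,B)$ is the set of all such $F_k$. $J[F_k](x)$ is the Jacobian of $F_k$ at $x$; for a matrix $A$, $\|A\|_\infty$ is the maximum absolute row sum and $\|A\|_{\infty,\infty}$ the maximum absolute entry; $\|\cdot\|_\infty$ on vectors is the maximum absolute entry and $\|\cdot\|$ the Euclidean norm. *)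

From HB Require Import structures.
From mathcomp Require Import all_boot all_order all_algebra.
From mathcomp Require Import all_classical all_reals all_analysis.
Set Implicit Arguments. Unset Strict Implicit. Unset Printing Implicit Defensive.
Import Order.TTheory GRing.Theory Num.Theory.
Import numFieldNormedType.Exports.
Local Open Scope ring_scope.

Section Net.
Variable R : realType.

Definition eta3 (t : R) : R := (Num.max t 0) ^+ 3.

(* Layers are indexed 0..L-1 here (layer l here = layer l+1 in the paper).
   Input / output dimension of layer l. *)
Definition din (d W l : nat) : nat := if l == 0%N then d else W.
Definition dout (L W l : nat) : nat := if l.+1 == L then 1%N else W.

(* Parameters: w l i j = entry (i,j) of W^(l+1); b l i = entry i of b^(l+1).
   Only indices i < dout l, j < din l are meaningful. *)
Definition weights := nat -> nat -> nat -> R.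
Definition biases := nat -> nat -> R.

(* pre n x = F_{n+1}(x) (components indexed by nat) *)
Fixpoint pre (d W : nat) (w : weights) (b : biases) (n : nat)
    (x : 'rV[R]_d) : nat -> R :=
  match n with
  | 0%N => fun i => \sum_(j < d) w 0%N i j * x 0 j + b 0%N i
  | n'.+1 => fun i =>
      \sum_(j < W) w n i j * eta3 (pre W w b n' x j) + b n i
  end.

(* F_k for k >= 1 *)
Definition Fk (d W : nat) (w : weights) (b : biases) (k : nat)
  (x : 'rV[R]_d) : nat -> R := pre W w b k.-1 x.

(* Membership of the parameters in the class defining Phi(L,W,S,B):
   correct shapes (encoded by dout/din), all entries bounded by B,
   at most S nonzero entries in total. *)
Definition in_Phi (L W S : nat) (B : R) (d : nat) (w : weights) (b : biases)
  : Prop :=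
  (forall l : 'I_L, forall i : 'I_(dout L W l), forall j : 'I_(din d W l),
      `|w l i j| <= B) /\
  (forall l : 'I_L, forall i : 'I_(dout L W l), `|b l i| <= B) /\
  (\sum_(l < L)
      (#|[set p : 'I_(dout L W l) * 'I_(din d W l) | w l p.1 p.2 != 0%R]|
       + #|[set i : 'I_(dout L W l) | b l i != 0%R]|) <= S)%N.

Definition jacobianF (L W d : nat) (w : weights) (b : biases) (k : nat)
  (x : 'rV[R]_d) : 'M[R]_(dout L W k.-1, d) :=
  \matrix_(i, j) 'D_(delta_mx 0 j) (fun y => Fk W w b k y i) x.

Definition mx_inf_norm (m n : nat) (A : 'M[R]_(m, n)) : R :=
  \big[Num.max/0]_(i < m) \sum_(j < n) `|A i j|.

Definition grad_norm (d W : nat) (w : weights) (b : biases) (L : nat)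
  (x : 'rV[R]_d) : R :=
  Num.sqrt (\sum_(j < d) ('D_(delta_mx 0 j) (fun y => Fk W w b L y 0%N) x) ^+ 2).

Definition in_Omega (d : nat) (x : 'rV[R]_d) : Prop :=
  forall j : 'I_d, 0 <= x 0 j <= 1.

End Net.

From HB Require Import structures.
From mathcomp Require Import all_boot all_order all_algebra.
From mathcomp Require Import all_classical all_reals all_analysis.
From mathcomp Require Import ring lra zify.
Import Order.TTheory GRing.Theory Num.Theory.
Import numFieldNormedType.Exports.
Local Open Scope ring_scope.
Set Implicit Arguments. Unset Strict Implicit. Unset Printing Implicit Defensive.

(* Forward-mode differentiation: the derivative of layer n+1 along v is
   sum_l w_l * eta3'(F_n l) * (derivative of F_n l), with eta3' t = 3 max(t,0)^2.
   With a = max(B, d), M_0 = 2 a^2 and M_(n+1) = 2 W a M_n^3, an induction over the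
   layers bounds the outputs of both networks by M_n, the l1 rows of their Jacobians
   by (3/2)^n M_n / 2, the output gap a |F_n - G_n| by delta (2^(n+1) - 1) M_n and the
   Jacobian gap by delta (9/2)^n M_n; each step only uses that eta3 and eta3' are
   bounded and Lipschitz on [-M_n, M_n].  Solving the recursion for M_n gives the
   stated constant, and for the gradients | |u| - |v| | <= |u - v|_1. *)

Section Activation.
Variable R : realType.
Implicit Types s t M : R.
Local Open Scope classical_set_scope.

Definition deta3 t : R := 3 * Num.max t 0 ^+ 2.

Lemma is_derive_eta3 t : is_derive t 1 (@eta3 R) (deta3 t).
Proof.
have [t_lt0|t_gt0|->] := ltgtP t 0.
- have -> : deta3 t = 0 by rewrite /deta3 max_r ?ltW // expr0n mulr0.
  apply: (@near_eq_is_derive _ _ _ (cst 0) _ _ _ 0).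
  near=> s; rewrite /eta3 max_r ?expr0n //.
  by apply: ltW; near: s; exact: lt_nbhsl.
- apply: (@near_eq_is_derive _ _ _ (@idfun R ^+ 3)).
    near=> s; rewrite /eta3 max_l // ltW //.
    by near: s; exact: lt_nbhsr.
  apply: (is_derive_eq (@is_deriveX _ _ (@idfun R) 3 t 1 1 (is_derive_id _ _))).
  by rewrite /deta3 max_l ?ltW // [_%:A]mulr1.
- (* near 0 the difference quotient h^-1 * eta3 h equals max(h,0)^2 *)
  have quot_cvg : (fun h : R => h^-1 *: ((@eta3 R \o shift 0) (h *: 1) - eta3 0))
      @ 0^' --> (0 : R).
    apply: (@cvg_trans _ ((fun h : R => Num.max h 0 * Num.max h 0) @ 0^')).
      apply: near_eq_cvg; near=> h.
      have h_neq0 : h != 0 by near: h; exact: nbhs_dnbhs_neq.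
      rewrite /= /eta3 addr0 [h%:A]mulr1 maxxx expr0n subr0 -[h^-1 *: _]/(h^-1 * _).
      have [h_le0|h_gt0] := leP h 0; first by rewrite mul0r expr0n mulr0.
      by rewrite exprS mulrA mulVf // mul1r expr2.
    have max0_cont : {for 0, continuous (@idfun R \max cst 0)}.
      by apply: continuous_max; [exact: cvg_id | exact: cvg_cst].
    have : (fun h : R => Num.max h 0 * Num.max h 0) @ (0 : R) --> Num.max (0 : R) 0 * Num.max 0 0.
      by apply: cvgM; exact: max0_cont.
    rewrite maxxx mulr0; exact: cvg_within_filter.
  apply: DeriveDef; first exact: cvgP quot_cvg.
  by rewrite /derive (cvg_lim _ quot_cvg) // /deta3 maxxx expr0n mulr0.
Unshelve. all: by end_near.
Qed.

Lemma dist_max0_le s t : `|Num.max s 0 - Num.max t 0| <= `|s - t|.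
Proof.
have := ler_norm (s - t); have := ler_norm (t - s); rewrite distrC ler_norml.
by case: (leP s 0) => hs; case: (leP t 0) => ht ? ?; apply/andP; split; lra.
Qed.

Lemma max0_bounds s M : `|s| <= M -> 0 <= Num.max s 0 <= M.
Proof.
have := ler_norm s; have := normr_ge0 s.
by case: (leP s 0) => hs ? ? ?; apply/andP; split; lra.
Qed.

Lemma eta3_norm_le s M : `|s| <= M -> `|eta3 s| <= M ^+ 3.
Proof.
move=> /max0_bounds /andP[s0 sM]; rewrite /eta3 ger0_norm ?exprn_ge0 //.
by rewrite lerXn2r // nnegrE; lra.
Qed.

Lemma deta3_bounds s M : `|s| <= M -> 0 <= deta3 s <= 3 * M ^+ 2.
Proof.
move=> /max0_bounds /andP[s0 sM]; rewrite /deta3 mulr_ge0 ?sqr_ge0 //=.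
by rewrite ler_pM2l // lerXn2r // nnegrE; lra.
Qed.

Lemma eta3_lipschitz s t M : `|s| <= M -> `|t| <= M ->
  `|eta3 s - eta3 t| <= 3 * M ^+ 2 * `|s - t|.
Proof.
move=> /max0_bounds /andP[s0 sM] /max0_bounds /andP[t0 tM].
have := dist_max0_le s t; rewrite /eta3.
set p := Num.max s 0 in s0 sM *; set q := Num.max t 0 in t0 tM *.
have pq0 : 0 <= p ^+ 2 + p * q + q ^+ 2.
  by rewrite !addr_ge0 ?sqr_ge0 ?mulr_ge0.
have -> : p ^+ 3 - q ^+ 3 = (p - q) * (p ^+ 2 + p * q + q ^+ 2) by ring.
rewrite normrM mulrC (ger0_norm pq0) => pq_le.
by apply: ler_pM => //; nra.
Qed.

Lemma deta3_lipschitz s t M : `|s| <= M -> `|t| <= M ->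
  `|deta3 s - deta3 t| <= 6 * M * `|s - t|.
Proof.
move=> /max0_bounds /andP[s0 sM] /max0_bounds /andP[t0 tM].
have := dist_max0_le s t; rewrite /deta3.
set p := Num.max s 0 in s0 sM *; set q := Num.max t 0 in t0 tM *.
have -> : 3 * p ^+ 2 - 3 * q ^+ 2 = (p - q) * (3 * (p + q)) by ring.
rewrite normrM mulrC (ger0_norm (_ : 0 <= 3 * (p + q))) => [pq_le|]; last lra.
by apply: ler_pM => //; lra.
Qed.

End Activation.

Section Derivative.
Variable R : realType.
Local Open Scope classical_set_scope.

Lemma derive_along_line (d : nat) (f : 'rV[R]_d -> R) (x v : 'rV[R]_d) :
  'D_v f x = 'D_1 (fun h : R => f (h *: v + x)) 0.
Proof.
rewrite /derive; suff -> : (fun h : R => h^-1 *: ((f \o shift x) (h *: v) - f x)) =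
  (fun h : R => h^-1 *: ((f \o (+%R^~ x) \o *:%R^~ v \o shift 0) (h *: 1) - f (0 *: v + x)))
  by [].
by apply: funext => h /=; rewrite addr0 scale0r add0r [_%:A]mulr1.
Qed.

Lemma is_derive_addr (f : R -> R) (c t df : R) :
  is_derive t 1 f df -> is_derive t 1 (fun h => f h + c) df.
Proof. by move=> f'; have := is_deriveD f' (is_derive_cst c t 1); rewrite addr0. Qed.

Variables (d W : nat) (w : weights R) (b : biases R) (x v : 'rV[R]_d).

Fixpoint dpre (n : nat) : nat -> R :=
  match n with
  | 0%N => fun i => \sum_(j < d) w 0%N i j * v 0 j
  | n'.+1 => fun i => \sum_(j < W) w n i j * (deta3 (pre W w b n' x j) * dpre n' j)
  end.

Lemma is_derive_pre n i :
  is_derive (0 : R) 1 (fun h : R => pre W w b n (h *: v + x) i) (dpre n i).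
Proof.
elim: n i => [|n IH] i /=; apply: is_derive_addr.
  have -> : (fun h : R => \sum_(j < d) w 0%N i j * (h *: v + x) 0 j) =
      (fun h => (\sum_(j < d) w 0%N i j * v 0 j) * h + \sum_(j < d) w 0%N i j * x 0 j).
    apply: funext => h; rewrite mulr_suml -big_split /=.
    by apply: eq_bigr => j _; rewrite !mxE; ring.
  apply: is_derive_addr; rewrite -[X in is_derive _ _ _ X]mulr1.
  exact: is_deriveZ.
have -> : (fun h : R => \sum_(j < W) w n.+1 i j * eta3 (pre W w b n (h *: v + x) j)) =
    \sum_(j < W) (fun h : R => w n.+1 i j * (@eta3 R \o (fun h => pre W w b n (h *: v + x) j)) h).
  by rewrite fct_sumE.
apply: is_derive_sum => j; apply: is_deriveZ.
by have := is_derive1_comp (is_derive_eta3 _) (IH j); rewrite scale0r add0r.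
Qed.

End Derivative.

Lemma derive_Fk (R : realType) (d W k : nat) (w : weights R) (b : biases R)
    (x v : 'rV[R]_d) i :
  'D_v (fun y => Fk W w b k y i) x = dpre W w b x v k.-1 i.
Proof. by rewrite derive_along_line; have [_ ->] := is_derive_pre W w b x v k.-1 i. Qed.

Section Sums.
Variable R : numDomainType.

Lemma ler_sum_cst (n : nat) (F : 'I_n -> R) (c : R) :
  (forall j, F j <= c) -> \sum_(j < n) F j <= n%:R * c.
Proof.
move=> Fc; apply: le_trans (ler_sum _ (fun j _ => Fc j)) _.
by rewrite sumr_const card_ord mulr_natl.
Qed.

Lemma ler_norm_sum_cst (n : nat) (F : 'I_n -> R) (c : R) :
  (forall j, `|F j| <= c) -> `|\sum_(j < n) F j| <= n%:R * c.
Proof. by move=> Fc; apply: le_trans (ler_norm_sum _ _ _) (ler_sum_cst Fc). Qed.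

Lemma ler_sum_term (n : nat) (F : 'I_n -> R) (j : 'I_n) :
  (forall i, 0 <= F i) -> F j <= \sum_(i < n) F i.
Proof. by move=> F0; rewrite (bigD1 j) //= lerDl sumr_ge0. Qed.

Lemma dist_mul_le (u u' s s' : R) :
  `|u * s - u' * s'| <= `|u - u'| * `|s| + `|u'| * `|s - s'|.
Proof.
have -> : u * s - u' * s' = (u - u') * s + u' * (s - s') by rewrite mulrBl mulrBr addrA subrK.
by rewrite -!normrM ler_normD.
Qed.

Lemma sum_norm_comb_le (n m : nat) (F : 'I_n -> 'I_m -> R) (al be : 'I_n -> R)
    (X Y : 'I_n -> 'I_m -> R) :
  (forall l j, F l j = al l * X l j + be l * Y l j) ->
  \sum_(j < m) `|\sum_(l < n) F l j| <=
  \sum_(l < n) (`|al l| * \sum_(j < m) `|X l j| + `|be l| * \sum_(j < m) `|Y l j|).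
Proof.
move=> FE; apply: le_trans
  (_ : _ <= \sum_(j < m) \sum_(l < n) (`|al l| * `|X l j| + `|be l| * `|Y l j|)) _.
  apply: ler_sum => j _; apply: le_trans (ler_norm_sum _ _ _) _.
  by apply: ler_sum => l _; rewrite FE -!normrM ler_normD.
by rewrite exchange_big /=; apply: ler_sum => l _; rewrite big_split /= !mulr_sumr.
Qed.

End Sums.

Section Euclid.
Variable R : rcfType.

Lemma sqrt_sum_sqr_le (m : nat) (f g : 'I_m -> R) :
  Num.sqrt (\sum_(j < m) f j ^+ 2) <=
  Num.sqrt (\sum_(j < m) g j ^+ 2) + \sum_(j < m) `|f j - g j|.
Proof.
set s := Num.sqrt (\sum_(j < m) g j ^+ 2); set S := \sum_(j < m) `|f j - g j|.
have s0 : 0 <= s by exact: sqrtr_ge0.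
have S0 : 0 <= S by exact: sumr_ge0.
have gs j : `|g j| <= s.
  rewrite -sqrtr_sqr; apply/ler_wsqrtr/(ler_sum_term (F := fun i => g i ^+ 2)).
  by move=> i; exact: sqr_ge0.
have fgS j : `|f j - g j| <= S by exact: (ler_sum_term (F := fun i => `|f i - g i|)).
(* expand f^2 = g^2 + 2 g (f - g) + (f - g)^2 termwise, then sum *)
rewrite -(ger0_norm (addr_ge0 s0 S0)) -sqrtr_sqr ler_sqrt ?sqr_ge0 //.
apply: le_trans
  (_ : _ <= \sum_(j < m) (g j ^+ 2 + 2 * (s * `|f j - g j|) + S * `|f j - g j|)) _.
  apply: ler_sum => j _.
  have gfg : g j * (f j - g j) <= s * `|f j - g j|.
    by apply: le_trans (ler_norm _) _; rewrite normrM ler_wpM2r.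
  have fg2 : (f j - g j) ^+ 2 <= S * `|f j - g j|.
    by rewrite -real_normK ?num_real // expr2 ler_wpM2r.
  have -> : f j ^+ 2 = g j ^+ 2 + 2 * (g j * (f j - g j)) + (f j - g j) ^+ 2 by ring.
  lra.
have sum_g2 : \sum_(j < m) g j ^+ 2 = s ^+ 2.
  by rewrite sqr_sqrtr // sumr_ge0 // => j _; exact: sqr_ge0.
rewrite !big_split /= -!mulr_sumr sum_g2 -/S; nra.
Qed.

Lemma dist_sqrt_sum_sqr_le (m : nat) (f g : 'I_m -> R) :
  `|Num.sqrt (\sum_(j < m) f j ^+ 2) - Num.sqrt (\sum_(j < m) g j ^+ 2)| <=
  \sum_(j < m) `|f j - g j|.
Proof.
have dist_sym : \sum_(j < m) `|g j - f j| = \sum_(j < m) `|f j - g j|.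
  by apply: eq_bigr => j _; exact: distrC.
have := sqrt_sum_sqr_le f g; have := sqrt_sum_sqr_le g f; rewrite dist_sym.
by rewrite ler_norml => ? ?; apply/andP; split; lra.
Qed.

End Euclid.

Section Rates.
Context {R : realFieldType}.

Fixpoint layer_bound (Wr a : R) (n : nat) : R :=
  if n is n'.+1 then 2 * Wr * a * layer_bound Wr a n' ^+ 3 else 2 * a ^+ 2.
Fixpoint jac_rate (n : nat) : R := if n is n'.+1 then 3 / 2 * jac_rate n' else 1 / 2.
Fixpoint err_rate (n : nat) : R := if n is n'.+1 then 2 * err_rate n' + 1 else 1.
Fixpoint jac_err_rate (n : nat) : R := if n is n'.+1 then 9 / 2 * jac_err_rate n' else 1.

Lemma jac_rate_ge0 n : 0 <= jac_rate n.
Proof. by elim: n => [|n IH] /=; lra. Qed.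

Lemma err_rate_ge1 n : 1 <= err_rate n.
Proof. by elim: n => [|n IH] /=; lra. Qed.

Lemma jac_err_rate_ge0 n : 0 <= jac_err_rate n.
Proof. by elim: n => [|n IH] /=; lra. Qed.

Lemma jac_rate_err_rate_le n : jac_rate n * (1 + 2 * err_rate n) <= 2 * jac_err_rate n.
Proof.
elim: n => [|n IH] /=; first lra.
by have := jac_rate_ge0 n; have := err_rate_ge1 n; nra.
Qed.

Lemma cube_ge8 (t : R) : 2 <= t -> 8 <= t ^+ 3.
Proof.
move=> t_ge2; have -> : 8 = 2 ^+ 3 :> R by rewrite !exprS expr0; lra.
by apply: lerXn2r; rewrite ?nnegrE //; lra.
Qed.

Lemma layer_bound_ge0 (Wr a : R) n : 0 <= Wr -> 0 <= a -> 0 <= layer_bound Wr a n.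
Proof. by move=> Wr0 a0; elim: n => [|n IH] /=; rewrite !mulr_ge0 ?exprn_ge0. Qed.

Lemma jac_err_bound_ge0 (Wr a delta : R) n : 0 <= Wr -> 0 <= a -> 0 <= delta ->
  0 <= delta * jac_err_rate n * layer_bound Wr a n.
Proof. by move=> Wr0 a0 delta0; rewrite !mulr_ge0 ?jac_err_rate_ge0 ?layer_bound_ge0. Qed.

End Rates.

Definition entries_bounded (R : realType) (L W d : nat) (B : R)
    (w : weights R) (b : biases R) :=
  (forall l i j, (l < L)%N -> (i < dout L W l)%N -> (j < din d W l)%N ->
     `|w l i j| <= B) /\
  (forall l i, (l < L)%N -> (i < dout L W l)%N -> `|b l i| <= B).

Lemma in_Phi_entries_bounded (R : realType) L W S B d (w : weights R) (b : biases R) :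
  in_Phi L W S B d w b -> entries_bounded L W d B w b.
Proof.
case=> [wB [bB _]]; split=> [l i j hl hi hj|l i hl hi].
  exact: (wB (Ordinal hl) (Ordinal hi) (Ordinal hj)).
exact: (bB (Ordinal hl) (Ordinal hi)).
Qed.

Lemma dout_inner L W n : (n.+1 < L)%N -> dout L W n = W.
Proof. by move=> nL; rewrite /dout ltn_eqF. Qed.

Lemma dpre0_unit (R : realType) (d W : nat) (w : weights R) (b : biases R)
    (x : 'rV[R]_d) i (j : 'I_d) :
  dpre W w b x (delta_mx 0 j) 0 i = w 0%N i j.
Proof.
rewrite /= (bigD1 j) //= mxE !eqxx mulr1 big1 ?addr0 // => l l_neq_j.
by rewrite mxE eqxx /= (negbTE l_neq_j) mulr0.
Qed.

Section Bounds.
Variables (R : realType) (L W d : nat) (B : R) (x : 'rV[R]_d).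
Hypotheses (W_ge2 : (2 <= W)%N) (B_gt0 : 0 < B) (x_le1 : forall j, `|x 0 j| <= 1).

Local Notation a := (Num.max B d%:R).
Local Notation M n := (layer_bound W%:R a n).

Lemma B_le_a : B <= a. Proof. by rewrite le_max lexx. Qed.
Lemma d_le_a : d%:R <= a. Proof. by rewrite le_max lexx orbT. Qed.
Lemma Wr_ge2 : 2 <= W%:R :> R. Proof. by rewrite ler_nat. Qed.

Hypothesis d_gt0 : (0 < d)%N.

Lemma a_ge1 : 1 <= a. Proof. by rewrite le_max ler1n d_gt0 orbT. Qed.

Lemma layer_bound_ge2 n : 2 <= M n.
Proof.
have a1 := a_ge1; elim: n => [|n IH] /=; first nra.
have : 1 <= W%:R * a by have := Wr_ge2; nra.
by have := cube_ge8 IH; nra.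
Qed.

Lemma pre_bound w b n i : entries_bounded L W d B w b ->
  (n < L)%N -> (i < dout L W n)%N -> `|pre W w b n x i| <= M n.
Proof.
move=> [wB bB]; elim: n i => [|n IH] i nL iout /=; apply: le_trans (ler_normD _ _) _.
  have : `|\sum_(j < d) w 0%N i j * x 0 j| <= d%:R * B.
    apply: ler_norm_sum_cst => j; rewrite normrM -[B]mulr1.
    by apply: ler_pM => //; exact: wB.
  have : d%:R * B <= a * a by rewrite ler_pM ?ler0n ?(ltW B_gt0) ?d_le_a ?B_le_a.
  have := bB 0%N i nL iout; have := a_ge1; have := B_le_a; rewrite expr2; nra.
have IHW l : (l < W)%N -> `|pre W w b n x l| <= M n.
  by move=> lW; apply: IH; rewrite ?dout_inner // ltnW.
have : `|\sum_(l < W) w n.+1 i l * eta3 (pre W w b n x l)| <= W%:R * (B * M n ^+ 3).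
  apply: ler_norm_sum_cst => l; rewrite normrM.
  by apply: ler_pM => //; [exact: wB | exact/eta3_norm_le/IHW].
have := bB n.+1 i nL iout; have := cube_ge8 (layer_bound_ge2 n).
have := a_ge1; have := B_le_a; have := Wr_ge2.
set z := M n ^+ 3 => W2 Ba a1 z8 b_le sum_le.
have : B * z <= a * z by nra.
have : 1 <= W%:R * z by nra.
nra.
Qed.

Lemma jac_bound w b n i : entries_bounded L W d B w b ->
  (n < L)%N -> (i < dout L W n)%N ->
  \sum_(j < d) `|dpre W w b x (delta_mx 0 j) n i| <= jac_rate n * M n.
Proof.
move=> wbB; have [wB bB] := wbB.
elim: n i => [|n IH] i nL iout.
  under eq_bigr do rewrite dpre0_unit.
  have : \sum_(j < d) `|w 0%N i j| <= d%:R * B by apply: ler_sum_cst => j; exact: wB.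
  have : d%:R * B <= a * a by rewrite ler_pM ?ler0n ?(ltW B_gt0) ?d_le_a ?B_le_a.
  rewrite /= expr2; lra.
have IHW l : (l < W)%N ->
    `|pre W w b n x l| <= M n /\
    \sum_(j < d) `|dpre W w b x (delta_mx 0 j) n l| <= jac_rate n * M n.
  by move=> lW; split; [apply: pre_bound | apply: IH]; rewrite ?dout_inner // ltnW.
apply: le_trans (sum_norm_comb_le
    (al := fun l : 'I_W => w n.+1 i l * deta3 (pre W w b n x l)) (be := fun=> 0)
    (X := fun l j => dpre W w b x (delta_mx 0 j) n l) (Y := fun _ _ => 0) _) _.
  by move=> l j; rewrite mul0r addr0 mulrA.
apply: le_trans (_ : _ <= W%:R * (B * (3 * M n ^+ 2) * (jac_rate n * M n))) _.
  apply: ler_sum_cst => l; have [IHv IHj] := IHW l (ltn_ord l).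
  have /andP[d0 d1] := deta3_bounds IHv.
  rewrite normr0 mul0r addr0 normrM (ger0_norm d0).
  apply: ler_pM; [by rewrite mulr_ge0 | by rewrite sumr_ge0 | | exact: IHj].
  by apply: ler_pM => //; exact: wB.
have M_ge0 : 0 <= M n by have := layer_bound_ge2 n; lra.
have c_ge0 : 0 <= 3 * W%:R * jac_rate n * M n ^+ 3.
  by rewrite !mulr_ge0 ?ler0n ?jac_rate_ge0 ?exprn_ge0.
have -> : W%:R * (B * (3 * M n ^+ 2) * (jac_rate n * M n)) =
    B * (3 * W%:R * jac_rate n * M n ^+ 3) by ring.
have -> : jac_rate n.+1 * M n.+1 = a * (3 * W%:R * jac_rate n * M n ^+ 3) by rewrite /=; field.
by apply: ler_wpM2r => //; exact: B_le_a.
Qed.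

Variables (k : nat) (delta : R) (wF wG : weights R) (bF bG : biases R).
Hypotheses (delta_gt0 : 0 < delta) (k_le_L : (k <= L)%N)
  (FB : entries_bounded L W d B wF bF) (GB : entries_bounded L W d B wG bG)
  (wD : forall l i j, (l < k)%N -> (i < dout L W l)%N -> (j < din d W l)%N ->
      `|wF l i j - wG l i j| <= delta)
  (bD : forall l i, (l < k)%N -> (i < dout L W l)%N -> `|bF l i - bG l i| <= delta).

Local Notation pF n := (pre W wF bF n x).
Local Notation pG n := (pre W wG bG n x).

(* One summand of a layer difference.  The input error [e] is only known through
   [a * e <= E], which suffices because the weight [u'] is bounded by [B <= a]. *)
Lemma dist_weighted_le (u u' s s' K e E S : R) :
  `|u - u'| <= delta -> `|s| <= S -> `|u'| <= B -> 0 <= K -> 0 <= e ->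
  `|s - s'| <= K * e -> a * e <= E -> `|u * s - u' * s'| <= delta * S + K * E.
Proof.
move=> du sS u'B K0 e0 ds aeE; apply: le_trans (dist_mul_le _ _ _ _) _.
apply: lerD; first by rewrite ler_pM.
apply: le_trans (_ : B * (K * e) <= _); first by rewrite ler_pM.
rewrite mulrCA ler_wpM2l //; apply: le_trans aeE.
by rewrite ler_wpM2r ?B_le_a.
Qed.

Lemma pre_diff_bound n i : (n < k)%N -> (i < dout L W n)%N ->
  a * `|pF n i - pG n i| <= delta * err_rate n * M n.
Proof.
have [wFB bFB] := FB; have [wGB bGB] := GB; have a1 := a_ge1.
elim: n i => [|n IH] i nk iout.
  rewrite /= opprD addrACA -sumrB.
  apply: le_trans (_ : a * (d%:R * delta + delta) <= _).
    rewrite ler_wpM2l ?(le_trans _ a1) //; apply: le_trans (ler_normD _ _) _.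
    rewrite lerD ?bD //; apply: ler_norm_sum_cst => j.
    by rewrite -mulrBl normrM -[delta]mulr1 ler_pM // wD.
  have : d%:R + 1 <= 2 * a by have := d_le_a; lra.
  have : 0 <= delta * a by rewrite mulr_ge0 ?(ltW delta_gt0) // (le_trans _ a1).
  rewrite /= expr2; nra.
have nL : (n.+1 < L)%N := leq_trans nk k_le_L.
have IHW (l : 'I_W) : [/\ `|pF n l| <= M n, `|pG n l| <= M n &
    a * `|pF n l - pG n l| <= delta * err_rate n * M n].
  have lout : (l < dout L W n)%N by rewrite dout_inner.
  have nL' := ltnW nL.
  by split; [exact: pre_bound FB nL' lout | exact: pre_bound GB nL' lout |
    exact: IH (ltnW nk) lout].
have term_le (l : 'I_W) :
    `|wF n.+1 i l * eta3 (pF n l) - wG n.+1 i l * eta3 (pG n l)|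
      <= delta * M n ^+ 3 + 3 * M n ^+ 2 * (delta * err_rate n * M n).
  have [lF lG lD] := IHW l.
  apply: (dist_weighted_le (K := 3 * M n ^+ 2) (e := `|pF n l - pG n l|)) => //.
  - exact: wD.
  - exact: eta3_norm_le lF.
  - exact: wGB.
  - by rewrite mulr_ge0 ?sqr_ge0.
  - exact: eta3_lipschitz lF lG.
rewrite /= opprD addrACA -sumrB.
apply: le_trans (_ : a * (W%:R * (delta * M n ^+ 3 + 3 * M n ^+ 2 * (delta * err_rate n * M n))
    + delta) <= _).
  rewrite ler_wpM2l ?(le_trans _ a1) //; apply: le_trans (ler_normD _ _) _.
  by rewrite lerD ?bD // ler_norm_sum_cst.
have z_ge1 : 1 <= W%:R * M n ^+ 3.
  by have := cube_ge8 (layer_bound_ge2 n); have := Wr_ge2; nra.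
have q_ge1 : 1 <= err_rate n :> R := err_rate_ge1 n.
rewrite -[X in _ <= X]/(delta * (2 * err_rate n + 1) * (2 * W%:R * a * M n ^+ 3)).
have -> : a * (W%:R * (delta * M n ^+ 3 + 3 * M n ^+ 2 * (delta * err_rate n * M n)) + delta) =
  delta * a * (W%:R * M n ^+ 3 * (1 + 3 * err_rate n) + 1) by ring.
have -> : delta * (2 * err_rate n + 1) * (2 * W%:R * a * M n ^+ 3) =
  delta * a * (W%:R * M n ^+ 3 * (4 * err_rate n + 2)) by ring.
rewrite ler_wpM2l ?mulr_ge0 ?(ltW delta_gt0) ?(le_trans _ a1) //.
move: z_ge1; set z := W%:R * M n ^+ 3; nra.
Qed.

Local Notation jF n j := (dpre W wF bF x (delta_mx 0 j) n).
Local Notation jG n j := (dpre W wG bG x (delta_mx 0 j) n).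

Lemma jac_diff_bound n i : (n < k)%N -> (i < dout L W n)%N ->
  \sum_(j < d) `|jF n j i - jG n j i| <= delta * jac_err_rate n * M n.
Proof.
have [wFB bFB] := FB; have [wGB bGB] := GB; have a1 := a_ge1.
elim: n i => [|n IH] i nk iout.
  under eq_bigr do rewrite !dpre0_unit.
  apply: le_trans (_ : d%:R * delta <= _); first by apply: ler_sum_cst => j; exact: wD.
  have : d%:R <= 2 * a ^+ 2 by have := d_le_a; rewrite expr2; nra.
  by rewrite /= mulr1 [delta * _]mulrC => ?; apply: ler_wpM2r => //; exact: ltW.
have nL : (n.+1 < L)%N := leq_trans nk k_le_L.
have IHW (l : 'I_W) : [/\ `|pF n l| <= M n, `|pG n l| <= M n,
    \sum_(j < d) `|jF n j l| <= jac_rate n * M n,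
    a * `|pF n l - pG n l| <= delta * err_rate n * M n &
    \sum_(j < d) `|jF n j l - jG n j l| <= delta * jac_err_rate n * M n].
  have lout : (l < dout L W n)%N by rewrite dout_inner.
  have nL' := ltnW nL; have nk' := ltnW nk.
  by split; [exact: pre_bound FB nL' lout | exact: pre_bound GB nL' lout |
    exact: jac_bound FB nL' lout | exact: pre_diff_bound nk' lout | exact: IH nk' lout].
under eq_bigr do rewrite /= -sumrB.
apply: le_trans (sum_norm_comb_le
  (al := fun l : 'I_W => wF n.+1 i l * deta3 (pF n l) - wG n.+1 i l * deta3 (pG n l))
  (be := fun l : 'I_W => wG n.+1 i l * deta3 (pG n l))
  (X := fun l j => jF n j l) (Y := fun l j => jF n j l - jG n j l) _) _.
  by move=> l j; ring.
apply: le_trans (_ : _ <= W%:R * ((delta * (3 * M n ^+ 2) + 6 * M n * (delta * err_rate n * M n))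
    * (jac_rate n * M n) + B * (3 * M n ^+ 2) * (delta * jac_err_rate n * M n))) _.
  apply: ler_sum_cst => l /=; have [lF lG lJ lD lJD] := IHW l.
  have /andP[dF0 dF1] := deta3_bounds lF; have /andP[dG0 dG1] := deta3_bounds lG.
  have M_ge0 : 0 <= M n by have := layer_bound_ge2 n; lra.
  apply: lerD; apply: ler_pM; rewrite ?sumr_ge0 //.
  - apply: (dist_weighted_le (K := 6 * M n) (e := `|pF n l - pG n l|)) => //.
    + exact: wD.
    + by rewrite ger0_norm.
    + exact: wGB.
    + by rewrite mulr_ge0.
    + exact: deta3_lipschitz lF lG.
  - by rewrite normrM (ger0_norm dG0) ler_pM //; exact: wGB.
have c_ge0 : 0 <= 3 * delta * W%:R * M n ^+ 3.
  by rewrite !mulr_ge0 ?ler0n ?(ltW delta_gt0) ?exprn_ge0 // (le_trans _ (layer_bound_ge2 n)).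
rewrite -[X in _ <= X]/(delta * (9 / 2 * jac_err_rate n) * (2 * W%:R * a * M n ^+ 3)).
have -> : W%:R * ((delta * (3 * M n ^+ 2) + 6 * M n * (delta * err_rate n * M n))
    * (jac_rate n * M n) + B * (3 * M n ^+ 2) * (delta * jac_err_rate n * M n)) =
  3 * delta * W%:R * M n ^+ 3 * (jac_rate n * (1 + 2 * err_rate n) + B * jac_err_rate n).
  by ring.
have -> : delta * (9 / 2 * jac_err_rate n) * (2 * W%:R * a * M n ^+ 3) =
  3 * delta * W%:R * M n ^+ 3 * (3 * a * jac_err_rate n) by field.
rewrite ler_wpM2l //.
have := @jac_rate_err_rate_le R n; have := @jac_err_rate_ge0 R n; have := B_le_a; nra.
Qed.

End Bounds.

Fixpoint W_exp n := if n is n'.+1 then (W_exp n' * 3).+1 else 0%N.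
Fixpoint a_exp n := if n is n'.+1 then (a_exp n' * 3).+1 else 2%N.
Fixpoint two_exp n := if n is n'.+1 then (two_exp n' * 3).+1 else 1%N.

Lemma W_expE n : ((3 ^ n - 1) %/ 2 = W_exp n)%N.
Proof.
have -> : (3 ^ n = 2 * W_exp n + 1)%N by elim: n => //= n IH; rewrite expnS IH; lia.
by rewrite addnK mulKn.
Qed.

Lemma a_expE n : ((5 * 3 ^ n - 1) %/ 2 = a_exp n)%N.
Proof.
have -> : (5 * 3 ^ n = 2 * a_exp n + 1)%N.
  by elim: n => //= n IH; rewrite expnS mulnCA IH; lia.
by rewrite addnK mulKn.
Qed.

Lemma two_expE n : ((3 ^ n.+1 - 1) %/ 2 = two_exp n)%N.
Proof.
have -> : (3 ^ n.+1 = 2 * two_exp n + 1)%N by elim: n => //= n IH; rewrite expnS IH; lia.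
by rewrite addnK mulKn.
Qed.

Lemma two_exp_ge n : (n <= two_exp n)%N.
Proof. by elim: n => //= n IH; lia. Qed.

Lemma layer_boundE (R : realFieldType) (Wr a : R) n :
  layer_bound Wr a n = Wr ^+ W_exp n * a ^+ a_exp n * 2 ^+ two_exp n.
Proof.
elim: n => [|n IH] /=; first by rewrite expr0 expr1; ring.
by rewrite IH !exprS !exprM; ring.
Qed.

Lemma jac_err_rateE (R : realFieldType) n : jac_err_rate n = (9 / 2) ^+ n :> R.
Proof. by elim: n => [|n IH] //=; rewrite IH exprS. Qed.

Lemma jac_diff_boundE (R : realFieldType) (Wr a delta : R) n :
  delta * Wr ^+ ((3 ^ n - 1) %/ 2) * a ^+ ((5 * 3 ^ n - 1) %/ 2)
    * 2 ^+ ((3 ^ n.+1 - 1) %/ 2 + 1 - n.+1) * 3 ^+ (2 * n.+1 - 2)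
  = delta * jac_err_rate n * layer_bound Wr a n.
Proof.
have -> : ((3 ^ n.+1 - 1) %/ 2 + 1 - n.+1 = two_exp n - n)%N.
  by rewrite two_expE; have := two_exp_ge n; lia.
have -> : (2 * n.+1 - 2 = 2 * n)%N by lia.
rewrite W_expE a_expE layer_boundE jac_err_rateE.
have -> : 2 ^+ two_exp n = 2 ^+ (two_exp n - n) * 2 ^+ n :> R.
  by rewrite -exprD subnK // two_exp_ge.
have -> : 3 ^+ (2 * n) = (9 / 2) ^+ n * 2 ^+ n :> R.
  by rewrite exprM -exprMn; congr (_ ^+ _); field.
ring.
Qed.

Lemma jac_dist_row_le (R : realType) (L W d k : nat) (B delta : R)
    (wF wG : weights R) (bF bG : biases R) (x : 'rV[R]_d) i :
  (2 <= W)%N -> 0 < B -> 0 < delta -> (0 < k)%N -> (k <= L)%N ->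
  entries_bounded L W d B wF bF -> entries_bounded L W d B wG bG ->
  (forall l i j, (l < k)%N -> (i < dout L W l)%N -> (j < din d W l)%N ->
     `|wF l i j - wG l i j| <= delta) ->
  (forall l i, (l < k)%N -> (i < dout L W l)%N -> `|bF l i - bG l i| <= delta) ->
  in_Omega x -> (i < dout L W k.-1)%N ->
  \sum_(j < d) `|dpre W wF bF x (delta_mx 0 j) k.-1 i - dpre W wG bG x (delta_mx 0 j) k.-1 i|
    <= delta * jac_err_rate k.-1 * layer_bound W%:R (Num.max B d%:R) k.-1.
Proof.
move=> W_ge2 B_gt0 delta_gt0 k_gt0 k_le_L FB GB wD bD x01 iout.
have [d0|d_gt0] := posnP d.
  rewrite big1 => [|j]; last by move: (ltn_ord j); rewrite {2}d0.
  by rewrite jac_err_bound_ge0 ?ler0n ?(ltW delta_gt0) // le_max (ltW B_gt0).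
have x_le1 j : `|x 0 j| <= 1 by have /andP[x0 x1] := x01 j; rewrite ger0_norm.
apply: (jac_diff_bound W_ge2 B_gt0 x_le1 d_gt0 delta_gt0 k_le_L FB GB wD bD) => //.
by rewrite ltn_predL.
Qed.

Theorem mainTheorem17 (R : realType) (L W S d k : nat) (B delta : R)
  (wF wG : weights R) (bF bG : biases R) :
  (2 <= W)%N -> 0 < B -> 0 < delta -> (1 <= k)%N -> (k <= L)%N ->
  in_Phi L W S B d wF bF -> in_Phi L W S B d wG bG ->
  (forall l : 'I_k, forall i : 'I_(dout L W l), forall j : 'I_(din d W l),
      `|wF l i j - wG l i j| <= delta) ->
  (forall l : 'I_k, forall i : 'I_(dout L W l), `|bF l i - bG l i| <= delta) ->
  let bound := delta * W%:R ^+ ((3 ^ k.-1 - 1) %/ 2)%N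
      * (Num.max B d%:R) ^+ ((5 * 3 ^ k.-1 - 1) %/ 2)%N
      * 2 ^+ ((3 ^ k - 1) %/ 2 + 1 - k)%N * 3 ^+ (2 * k - 2)%N in
  (forall x : 'rV[R]_d, in_Omega x ->
     mx_inf_norm (jacobianF L W wF bF k x - jacobianF L W wG bG k x) <= bound) /\
  (k = L -> forall x : 'rV[R]_d, in_Omega x ->
     `|grad_norm W wF bF L x - grad_norm W wG bG L x| <= bound).
Proof.
move=> W_ge2 B_gt0 delta_gt0 k_gt0 k_le_L /in_Phi_entries_bounded FB
  /in_Phi_entries_bounded GB wD bD bound.
have row_le := jac_dist_row_le W_ge2 B_gt0 delta_gt0 k_gt0 k_le_L FB GB
  (fun l i j lk il jl => wD (Ordinal lk) (Ordinal il) (Ordinal jl))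
  (fun l i lk il => bD (Ordinal lk) (Ordinal il)).
have boundE : bound = delta * jac_err_rate k.-1 * layer_bound W%:R (Num.max B d%:R) k.-1.
  have [n kE] : exists n, k = n.+1 by exists k.-1; rewrite prednK.
  by rewrite /bound kE jac_diff_boundE.
rewrite -boundE in row_le.
split=> [x x01 | kL x x01].
  apply: bigmax_le => [|i _].
    by rewrite boundE jac_err_bound_ge0 ?ler0n ?(ltW delta_gt0) // le_max (ltW B_gt0).
  under eq_bigr do rewrite !mxE !derive_Fk.
  exact: row_le.
rewrite /grad_norm; under eq_bigr do rewrite derive_Fk.
under [X in `|_ - Num.sqrt X|]eq_bigr do rewrite derive_Fk.
apply: le_trans (dist_sqrt_sum_sqr_le _ _) _.
by rewrite -kL; apply: row_le; rewrite // /dout prednK // kL eqxx.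
Qed.
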